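(* Let $d_1\le\dots\le d_n$ be a \textsc{2-Visits} instance with discretized sequence $A$, and let $\langle a_i,\dots,a_j\rangle$ be a cluster of $A$. In any feasible schedule in which all secondary visits are placed in gaps and the secondary visits appear in order of non-decreasing induced deadlines, the primary visits of nodes $i,\dots,j$ occupy exactly the positions $a_i,\dots,a_j$ (in some order).
   Context: \textsc{2-Visits} (primary/secondary formulation): given non-decreasing positive integers $d_1\le\dots\le d_n$, a feasible schedule is a schedule of length $2n$ (each position $1,\dots,2n$ holds one visit) containing one primary and one secondary visit of each node $i\in[n]$, such that the primary visit of $i$ is at position at most $d_i$, and the secondary visit of $i$ is either before its primary visit or at most $d_i$ positions after its primary visit. The discretized sequence $A=\langle a_1,\dots,a_n\rangle$ is defined by $a_n=d_n$ and $a_i=\min\{a_{i+1}-1,d_i\}$ for $i<n$; a gap is a position $p\in[2n]$ with $p\notin A$. A cluster is a maximal contiguous subsequence $\langle a_p,\dots,a_q\rangle$ of $A$ consisting of consecutive integers. If the primary visit of node $i$ is at position $t_i$, its induced deadline is $d_i+t_i$. Standing assumptions: all entries of $A$ are positive and all $d_i\le 2n$. *)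

(* Nodes are indexed 1..n, positions 1..2n. *)
From mathcomp Require Import all_boot.
Set Implicit Arguments. Unset Strict Implicit. Unset Printing Implicit Defensive.

Definition nondecreasing (n : nat) (d : nat -> nat) : Prop :=
  forall i, 1 <= i -> i < n -> d i <= d i.+1.

Definition positive_deadlines (n : nat) (d : nat -> nat) : Prop :=
  forall i, 1 <= i <= n -> 0 < d i.

(* disc_aux n d k = a_{n-k}:  a_n = d_n, a_i = min (a_{i+1} - 1) d_i *)
Fixpoint disc_aux (n : nat) (d : nat -> nat) (k : nat) : nat :=
  match k with
  | 0 => d n
  | k'.+1 => minn (disc_aux n d k' - 1) (d (n - k))
  end.

Definition disc (n : nat) (d : nat -> nat) (i : nat) : nat := disc_aux n d (n - i).

(* A schedule of length 2n given by primary positions t i and secondary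
   positions s i (i in [n]); all 2n visits occupy distinct positions in
   [1, 2n], hence every position holds exactly one visit. *)
Definition feasible_schedule (n : nat) (d t s : nat -> nat) : Prop :=
  (forall i, 1 <= i <= n -> 1 <= t i <= 2 * n /\ 1 <= s i <= 2 * n) /\
  (forall i k, 1 <= i <= n -> 1 <= k <= n -> i <> k -> t i <> t k /\ s i <> s k) /\
  (forall i k, 1 <= i <= n -> 1 <= k <= n -> t i <> s k) /\
  (forall i, 1 <= i <= n ->
     t i <= d i /\ (s i < t i \/ s i <= t i + d i)).

Definition is_gap (n : nat) (d : nat -> nat) (p : nat) : Prop :=
  1 <= p <= 2 * n /\ forall k, 1 <= k <= n -> disc n d k <> p.

Definition is_cluster (n : nat) (d : nat -> nat) (p q : nat) : Prop :=
  1 <= p /\ p <= q /\ q <= n /\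
  (forall k, p <= k -> k < q -> disc n d k.+1 = (disc n d k).+1) /\
  (p = 1 \/ disc n d p <> (disc n d p.-1).+1) /\
  (q = n \/ disc n d q.+1 <> (disc n d q).+1).

Definition induced_deadline (d t : nat -> nat) (i : nat) : nat := d i + t i.

From mathcomp Require Import all_boot zify.
Set Implicit Arguments. Unset Strict Implicit. Unset Printing Implicit Defensive.

(* The 2n visits fill the positions 1..2n and no secondary visit sits on an
   entry of A, so each of the n distinct entries of A holds a primary visit:
   the primaries occupy exactly A.  If A splits between a_m and a_(m+1), the
   recursion defining A gives a_m = d_m, so the primaries of nodes 1..m lie at
   positions <= d_m = a_m, i.e. among a_1..a_m, and by counting they fill them.
   Applying this at both ends of the cluster and cancelling the common prefix
   gives the claim. *)

Lemma map_iotaP (T : eqType) (f : nat -> T) i j x :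
  reflect (exists2 k, i <= k <= j & f k = x) (x \in map f (iota i (j.+1 - i))).
Proof.
apply: (iffP mapP) => [[k] | [k k_ij <-]].
  by rewrite mem_iota => k_ij ->; exists k => //; lia.
by exists k; rewrite // mem_iota; lia.
Qed.

Section Discretization.
Variables (n : nat) (d : nat -> nat).

Lemma disc_rec k : k < n -> disc n d k = minn (disc n d k.+1 - 1) (d k).
Proof.
move=> lt_kn; rewrite /disc.
have -> : n - k = (n - k.+1).+1 by lia.
by rewrite /=; congr (minn _ (d _)); lia.
Qed.

Lemma disc_le_deadline k : k <= n -> disc n d k <= d k.
Proof.
rewrite leq_eqVlt => /predU1P [->|lt_kn]; first by rewrite /disc subnn.
by rewrite disc_rec // geq_minr.
Qed.

Lemma nondecreasing_homo_in :
  nondecreasing n d -> {in iota 1 n &, {homo d : k l / k <= l}}.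
Proof.
move=> d_nondecr; apply: homo_leq_in => [//|y x z|k l|k]; first exact: leq_trans.
  by rewrite !mem_iota => k_in l_in m; rewrite mem_iota; lia.
by rewrite !mem_iota => k_in k1_in; apply: d_nondecr; lia.
Qed.

Hypothesis disc_pos : forall k, 1 <= k <= n -> 0 < disc n d k.

Lemma disc_lt_succ k : k < n -> disc n d k < disc n d k.+1.
Proof.
move=> lt_kn; have : 0 < disc n d k.+1 by apply: disc_pos; lia.
by rewrite (disc_rec lt_kn); lia.
Qed.

Lemma disc_leq_mono : {in iota 1 n &, {mono disc n d : k l / k <= l}}.
Proof.
apply: leq_mono_in; apply: homo_ltn_in => [y x z|k l|k]; first exact: ltn_trans.
  by rewrite !mem_iota => k_in l_in m; rewrite mem_iota; lia.
by rewrite !mem_iota => _ k1_in; apply: disc_lt_succ; lia.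
Qed.

Lemma uniq_disc m : m <= n -> uniq (map (disc n d) (iota 1 m)).
Proof.
move=> le_mn; rewrite map_inj_in_uniq ?iota_uniq //.
apply: sub_in2 (incn_inj_in disc_leq_mono) => k; rewrite !mem_iota; lia.
Qed.

Lemma disc_eq_deadline k :
  k < n -> disc n d k.+1 <> (disc n d k).+1 -> disc n d k = d k.
Proof.
move=> lt_kn; have : 0 < disc n d k.+1 by apply: disc_pos; lia.
by rewrite (disc_rec lt_kn); lia.
Qed.

End Discretization.

Definition cluster_cut (n : nat) (d : nat -> nat) (m : nat) : Prop :=
  m = 0 \/ m = n \/ disc n d m.+1 <> (disc n d m).+1.

Lemma cluster_cut_first n d i j : is_cluster n d i j -> cluster_cut n d i.-1.
Proof.
move=> [i_gt0 [_ [_ [_ [i_first _]]]]]; rewrite /cluster_cut prednK //.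
by case: i_first; [left; lia | right; right].
Qed.

Lemma cluster_cut_last n d i j : is_cluster n d i j -> cluster_cut n d j.
Proof. by move=> [_ [_ [_ [_ [_ [->|j_last]]]]]]; right; [left | right]. Qed.

Section Schedule.
Variables (n : nat) (d t s : nat -> nat).
Hypothesis disc_pos : forall k, 1 <= k <= n -> 0 < disc n d k.
Hypothesis deadline_le : forall k, 1 <= k <= n -> d k <= 2 * n.
Hypothesis feasible : feasible_schedule n d t s.
Hypothesis secondaries_in_gaps : forall k, 1 <= k <= n -> is_gap n d (s k).

Local Notation primaries m := (map t (iota 1 m)).
Local Notation secondaries := (map s (iota 1 n)).
Local Notation discs m := (map (disc n d) (iota 1 m)).

Lemma primaries_inj : {in iota 1 n &, injective t}.
Proof.
have [_ [distinct _]] := feasible.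
move=> k l; rewrite !mem_iota => k_in l_in; case: (k =P l) => // neq_kl.
by have /(_ k_in l_in neq_kl) [] := distinct k l.
Qed.

Lemma secondaries_inj : {in iota 1 n &, injective s}.
Proof.
have [_ [distinct _]] := feasible.
move=> k l; rewrite !mem_iota => k_in l_in; case: (k =P l) => // neq_kl.
by have /(_ k_in l_in neq_kl) [] := distinct k l.
Qed.

Lemma uniq_primaries m : m <= n -> uniq (primaries m).
Proof.
move=> le_mn; rewrite map_inj_in_uniq ?iota_uniq //.
by apply: sub_in2 primaries_inj => k; rewrite !mem_iota; lia.
Qed.

Lemma uniq_visits : uniq (primaries n ++ secondaries).
Proof.
have [_ [_ [prim_neq_sec _]]] := feasible.
rewrite cat_uniq uniq_primaries // (map_inj_in_uniq secondaries_inj) iota_uniq andbT.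
apply/hasPn => x /mapP [k]; rewrite mem_iota => k_in ->.
by apply/mapP => [[l]]; rewrite mem_iota => l_in /esym; exact: prim_neq_sec.
Qed.

Lemma visits_cover : {subset iota 1 (2 * n) <= primaries n ++ secondaries}.
Proof.
have [in_range _] := feasible.
have sub : {subset primaries n ++ secondaries <= iota 1 (2 * n)}.
  move=> p; rewrite mem_cat mem_iota => /orP [] /mapP [k];
    by rewrite mem_iota => k_in ->; have := in_range k k_in; lia.
have size_le : size (iota 1 (2 * n)) <= size (primaries n ++ secondaries).
  by rewrite size_cat !size_map !size_iota addnn -mul2n.
by have [_ eq_mem] := uniq_min_size uniq_visits sub size_le; move=> p; rewrite eq_mem.
Qed.

Lemma discs_sub_primaries : {subset discs n <= primaries n}.
Proof.
move=> x /mapP [l]; rewrite mem_iota => l_in ->.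
have : disc n d l \in iota 1 (2 * n).
  have le_ln : l <= n by lia.
  have := disc_le_deadline d le_ln; have := disc_pos l_in; have := deadline_le l_in.
  by rewrite mem_iota; lia.
move=> /visits_cover; rewrite mem_cat => /orP [//|/mapP [k]].
rewrite mem_iota => k_in disc_eq.
by have [_ /(_ l l_in)] := secondaries_in_gaps k_in.
Qed.

Lemma primaries_sub_discs : {subset primaries n <= discs n}.
Proof.
have size_le : size (primaries n) <= size (discs n) by rewrite !size_map.
have uniq_discs := uniq_disc disc_pos (leqnn n).
have [_ eq_mem] := uniq_min_size uniq_discs discs_sub_primaries size_le.
by move=> x; rewrite eq_mem.
Qed.

Lemma perm_primaries_prefix m :
  m <= n -> (forall k, 1 <= k <= m -> t k <= disc n d m) ->
  perm_eq (primaries m) (discs m).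
Proof.
move=> le_mn t_le.
have sub : {subset primaries m <= discs m}.
  move=> x /mapP [k]; rewrite mem_iota => k_in ->.
  have /mapP [l l_in t_eq] : t k \in discs n.
    by apply/primaries_sub_discs/map_f; rewrite mem_iota; lia.
  have m_in : m \in iota 1 n by rewrite mem_iota; lia.
  apply/mapP; exists l => //; have := t_le k k_in.
  by rewrite t_eq (disc_leq_mono disc_pos) // mem_iota; move: l_in; rewrite mem_iota; lia.
have size_le : size (discs m) <= size (primaries m) by rewrite !size_map.
have [_ eq_mem] := uniq_min_size (uniq_primaries le_mn) sub size_le.
exact: uniq_perm (uniq_primaries le_mn) (uniq_disc disc_pos le_mn) eq_mem.
Qed.

Hypothesis deadline_nondecr : nondecreasing n d.

Lemma primaries_le_cut m k :
  m <= n -> cluster_cut n d m -> 1 <= k <= m -> t k <= disc n d m.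
Proof.
move=> le_mn cut k_in; have [_ [_ [_ t_le]]] := feasible.
have k_range : 1 <= k <= n by lia.
case: (ltnP m n) => [lt_mn | ge_mn].
  case: cut => [|[|gap]]; try lia.
  rewrite (disc_eq_deadline disc_pos lt_mn gap).
  apply: leq_trans (proj1 (t_le k k_range)) _.
  by apply: (nondecreasing_homo_in deadline_nondecr); rewrite ?mem_iota; lia.
have -> : m = n by lia.
have /mapP [l + ->] : t k \in discs n.
  by apply/primaries_sub_discs/map_f; rewrite mem_iota.
by rewrite mem_iota => l_in; rewrite (disc_leq_mono disc_pos) ?mem_iota; lia.
Qed.

Lemma perm_primaries_cut m :
  m <= n -> cluster_cut n d m -> perm_eq (primaries m) (discs m).
Proof.
by move=> le_mn cut; apply: perm_primaries_prefix => // k; apply: primaries_le_cut.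
Qed.

Lemma perm_primaries_cluster i j : is_cluster n d i j ->
  perm_eq (map t (iota i (j.+1 - i))) (map (disc n d) (iota i (j.+1 - i))).
Proof.
move=> cluster; have [i_gt0 [le_ij [le_jn _]]] := cluster.
have iota_split : iota 1 j = iota 1 i.-1 ++ iota i (j.+1 - i).
  by have := iotaD 1 i.-1 (j.+1 - i); rewrite add1n prednK // => <-; congr iota; lia.
have le_in : i.-1 <= n by lia.
have := perm_primaries_cut le_jn (cluster_cut_last cluster).
rewrite iota_split !map_cat.
have prefix_perm := perm_primaries_cut le_in (cluster_cut_first cluster).
by rewrite (perm_catr _ prefix_perm) perm_cat2l.
Qed.

End Schedule.

Theorem lemma6 (n : nat) (d t s : nat -> nat) (i j : nat) :
  nondecreasing n d ->
  positive_deadlines n d ->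
  (forall k, 1 <= k <= n -> 0 < disc n d k) ->
  (forall k, 1 <= k <= n -> d k <= 2 * n) ->
  is_cluster n d i j ->
  feasible_schedule n d t s ->
  (forall k, 1 <= k <= n -> is_gap n d (s k)) ->
  (forall k l, 1 <= k <= n -> 1 <= l <= n -> s k < s l ->
     induced_deadline d t k <= induced_deadline d t l) ->
  forall p, (exists2 k, i <= k <= j & t k = p) <-> (exists2 k, i <= k <= j & disc n d k = p).
Proof.
move=> d_nondecr _ disc_pos d_le cluster feasible gaps _ p.
have cluster_perm :=
  perm_primaries_cluster disc_pos d_le feasible gaps d_nondecr cluster.
by rewrite (rwP (map_iotaP _ i j p)) (rwP (map_iotaP _ i j p)) (perm_mem cluster_perm).
Qed.
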